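(* Let $\mu>0$ and $\lambda_1>0$, and consider the system $$\frac{dx}{dt}=\lambda_1\bigl(2\mu y-4\mu xy-2x^2-2xy+x\bigr),\qquad \frac{dy}{dt}=\lambda_1\bigl(\mu y-4\mu y^2-2xy-2y^2+y\bigr).$$ Let $Q\subset\mathbb{R}^2$ be the closed quadrangle defined by $y\ge x/2$, $y\ge 1/2-x$, $y\le 1/3$, $y\le 1/2-x/2$, and let $(x_c,y_c)=\left(\frac{\mu+1}{2\mu+3},\frac{\mu+1}{4\mu+6}\right)$. Then $(x_c,y_c)$ is asymptotically stable in $Q$: for every initial condition $(x_0,y_0)\in Q$, the solution satisfies $\lim_{t\to\infty}(x(t),y(t))=(x_c,y_c)$.
   Context: $Q$ is the domain of convex mosaics in the inverse symbolic plane, with vertices $(1/3,1/6)$, $(1/2,1/4)$, $(1/3,1/3)$, $(1/6,1/3)$. *)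

From Stdlib Require Import Reals.
From Coquelicot Require Import Coquelicot.
Open Scope R_scope.

Definition inQ (x y : R) : Prop :=
  x / 2 <= y /\ 1/2 - x <= y /\ y <= 1/3 /\ y <= 1/2 - x / 2.

Definition fx (mu lam1 x y : R) : R :=
  lam1 * (2*mu*y - 4*mu*x*y - 2*x^2 - 2*x*y + x).
Definition fy (mu lam1 x y : R) : R :=
  lam1 * (mu*y - 4*mu*y^2 - 2*x*y - 2*y^2 + y).

Definition xc (mu : R) : R := (mu + 1) / (2*mu + 3).
Definition yc (mu : R) : R := (mu + 1) / (4*mu + 6).

From Stdlib Require Import Reals Lra Psatz.
From Coquelicot Require Import Coquelicot.
Open Scope R_scope.

(* Where [y > 0], the substitution [Z = 1/y], [V = (x - 2y)/y] linearises the
   system: [V' = -lam mu V] and [Z' = -lam (mu + 1) Z + lam (4 mu + 6 + 2 V)].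
   Hence [V -> 0], [Z -> (4 mu + 6)/(mu + 1)], and [(x, y) = ((V + 2)/Z, 1/Z)]
   tends to [(xc, yc)].  As [y] is not known a priori to stay away from 0, the
   substitution is justified backwards: for the explicit [Z] and [V], the
   defects [P = y Z - 1] and [Q = (x - 2y) Z - V] satisfy a linear system with
   locally bounded coefficients and tend to 0 at [0+], so Gronwall's inequality
   for [P^2 + Q^2] makes them vanish. *)

Lemma filterlim_Rplus_fun {T} (F : (T -> Prop) -> Prop) {FF : Filter F}
  (f g : T -> R) (a b : R) :
  filterlim f F (locally a) -> filterlim g F (locally b) ->
  filterlim (fun s => f s + g s) F (locally (a + b)).
Proof. intros Hf Hg. exact (filterlim_comp_2 _ _ _ Hf Hg (filterlim_plus a b)). Qed.

Lemma filterlim_Rmult_fun {T} (F : (T -> Prop) -> Prop) {FF : Filter F}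
  (f g : T -> R) (a b : R) :
  filterlim f F (locally a) -> filterlim g F (locally b) ->
  filterlim (fun s => f s * g s) F (locally (a * b)).
Proof. intros Hf Hg. exact (filterlim_comp_2 _ _ _ Hf Hg (filterlim_mult a b)). Qed.

Lemma filterlim_Rminus_fun {T} (F : (T -> Prop) -> Prop) {FF : Filter F}
  (f g : T -> R) (a b : R) :
  filterlim f F (locally a) -> filterlim g F (locally b) ->
  filterlim (fun s => f s - g s) F (locally (a - b)).
Proof.
  intros Hf Hg. apply (filterlim_Rplus_fun F f (fun s => - g s)); [exact Hf|].
  eapply filterlim_comp; [exact Hg|apply (filterlim_opp b)].
Qed.

Lemma filterlim_at_right_of_derive (f : R -> R) (a l : R) :
  is_derive f a l -> filterlim f (at_right a) (locally (f a)).
Proof.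
  intros Hf. apply (filterlim_filter_le_1 _ (filter_le_within (F := locally a) _)).
  apply (ex_derive_continuous (K := R_AbsRing) (V := R_NormedModule)).
  exists l. exact Hf.
Qed.

Lemma ex_derive_continuity_pt (f : R -> R) (t : R) :
  ex_derive f t -> continuity_pt f t.
Proof.
  intros Hf. apply continuity_pt_filterlim.
  exact (ex_derive_continuous (K := R_AbsRing) (V := R_NormedModule) f t Hf).
Qed.

Lemma bounded_Ioc_of_derive (f : R -> R) (T : R) :
  (forall t, 0 < t -> ex_derive f t) ->
  filterlim f (at_right 0) (locally (f 0)) ->
  exists M, forall t, 0 < t <= T -> Rabs (f t) <= M.
Proof.
  intros Hd Hf.
  destruct (proj1 (filterlim_locally f (f 0)) Hf (mkposreal 1 Rlt_0_1)) as [d Hnear].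
  pose proof (cond_pos d) as Hd0.
  set (b := Rmax (d / 2) T).
  assert (Hcont : forall s, d / 2 <= s <= b -> continuity_pt (fun s => Rabs (f s)) s).
  { intros s Hs. apply (continuity_pt_comp f Rabs); [|apply Rcontinuity_abs].
    apply ex_derive_continuity_pt, Hd. lra. }
  destruct (continuity_ab_maj _ _ _ (Rmax_l _ _) Hcont) as [m [Hm _]].
  exists (Rmax (Rabs (f 0) + 1) (Rabs (f m))).
  intros t Ht. destruct (Rlt_le_dec t d) as [Htd|Htd].
  - eapply Rle_trans; [|apply Rmax_l].
    assert (Hball : Rabs (f t - f 0) < 1).
    { apply (Hnear t); [|lra]. change (Rabs (t - 0) < d).
      rewrite Rminus_0_r, Rabs_pos_eq; lra. }
    pose proof (Rabs_triang_inv (f t) (f 0)). lra.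
  - eapply Rle_trans; [|apply Rmax_r].
    apply Hm. split; [lra|]. eapply Rle_trans; [apply Ht|apply Rmax_r].
Qed.

Lemma nonpos_of_derive_nonpos (G dG : R -> R) (T : R) :
  (forall t, 0 < t -> is_derive G t (dG t)) ->
  (forall t, 0 < t <= T -> dG t <= 0) ->
  filterlim G (at_right 0) (locally 0) ->
  forall t, 0 < t <= T -> G t <= 0.
Proof.
  intros Hd Hneg Hlim t Ht.
  destruct (Rle_lt_dec (G t) 0) as [|Hpos]; [assumption|exfalso].
  assert (Hnear : at_right 0 (fun s => 0 < s /\ s < t /\ G s < G t)).
  { repeat apply filter_and.
    - exists (mkposreal 1 Rlt_0_1). tauto.
    - apply filter_le_within, (open_lt t 0). lra.
    - apply (Hlim (fun r => r < G t)), (open_lt (G t) 0 Hpos). }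
  destruct (Hierarchy.filter_ex _ Hnear) as [s [Hs0 [Hst HGs]]].
  destruct (MVT_gen G s t dG) as [c [Hc Hmvt]];
    rewrite ?Rmin_left, ?Rmax_right in * by lra.
  - intros r Hr. apply Hd. lra.
  - intros r Hr. apply ex_derive_continuity_pt.
    exists (dG r). apply Hd. lra.
  - assert (dG c * (t - s) <= 0) by (apply Rmult_le_0_r; [apply Hneg|]; lra).
    lra.
Qed.

Lemma nonpos_of_derive_le_scale (E dE : R -> R) (C T : R) :
  (forall t, 0 < t -> is_derive E t (dE t)) ->
  (forall t, 0 < t <= T -> dE t <= C * E t) ->
  filterlim E (at_right 0) (locally 0) ->
  forall t, 0 < t <= T -> E t <= 0.
Proof.
  intros Hd Hle Hlim t Ht.
  assert (Hexp : forall s, is_derive (fun r => exp (- C * r)) s (- C * exp (- C * s)))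
    by (intros s; auto_derive; [auto|ring]).
  assert (HG : E t * exp (- C * t) <= 0).
  { apply (nonpos_of_derive_nonpos (fun s => E s * exp (- C * s))
             (fun s => (dE s - C * E s) * exp (- C * s)) T);
      [| | |exact Ht].
    - intros s Hs.
      replace ((dE s - C * E s) * exp (- C * s))
        with (dE s * exp (- C * s) + E s * (- C * exp (- C * s))) by ring.
      exact (is_derive_mult E _ s _ _ (Hd s Hs) (Hexp s) Rmult_comm).
    - intros s Hs. apply Rmult_le_0_r; [|left; apply exp_pos].
      specialize (Hle s Hs). lra.
    - replace (locally 0) with (locally (0 * exp (- C * 0))) by (f_equal; ring).
      apply (filterlim_Rmult_fun _ E); [exact Hlim|].
      exact (filterlim_at_right_of_derive _ 0 _ (Hexp 0)). }
  pose proof (exp_pos (- C * t)). nra.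
Qed.

Lemma linear_ode2_eq0 (a b c d P Q : R -> R) (M T : R) :
  (forall t, 0 < t -> is_derive P t (a t * P t + b t * Q t)) ->
  (forall t, 0 < t -> is_derive Q t (c t * P t + d t * Q t)) ->
  (forall t, 0 < t <= T ->
     Rabs (a t) <= M /\ Rabs (b t) <= M /\ Rabs (c t) <= M /\ Rabs (d t) <= M) ->
  filterlim P (at_right 0) (locally 0) ->
  filterlim Q (at_right 0) (locally 0) ->
  forall t, 0 < t <= T -> P t = 0 /\ Q t = 0.
Proof.
  intros HP HQ Hbound HP0 HQ0 t Ht.
  set (E := fun s => P s * P s + Q s * Q s).
  assert (HE : E t <= 0).
  { apply (nonpos_of_derive_le_scale E
             (fun s => 2 * P s * (a s * P s + b s * Q s)
                     + 2 * Q s * (c s * P s + d s * Q s)) (4 * M) T);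
      [| |unfold E|exact Ht].
    - intros s Hs. unfold E.
      replace (2 * P s * _ + _) with
        ((a s * P s + b s * Q s) * P s + P s * (a s * P s + b s * Q s)
         + ((c s * P s + d s * Q s) * Q s + Q s * (c s * P s + d s * Q s))) by ring.
      apply (is_derive_plus (fun s => P s * P s) (fun s => Q s * Q s)).
      + exact (is_derive_mult P P s _ _ (HP s Hs) (HP s Hs) Rmult_comm).
      + exact (is_derive_mult Q Q s _ _ (HQ s Hs) (HQ s Hs) Rmult_comm).
    - intros s Hs. unfold E.
      destruct (Hbound s Hs) as (Ha & Hb & Hc & Hd).
      apply Rabs_le_between in Ha, Hb, Hc, Hd.
      (* [2 b P Q <= M (P^2 + Q^2)] comes from
         [(M - b)(P + Q)^2 + (M + b)(P - Q)^2 >= 0], and likewise for [c]. *)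
      assert (Hsq : forall k u, - M <= k <= M ->
                0 <= (M - k) * (u * u) /\ 0 <= (M + k) * (u * u))
        by (intros k u Hk; split; apply Rmult_le_pos; lra || apply Rle_0_sqr).
      pose proof (Hsq _ (P s) Ha). pose proof (Hsq _ (Q s) Hd).
      pose proof (Hsq _ (P s + Q s) Hb). pose proof (Hsq _ (P s - Q s) Hb).
      pose proof (Hsq _ (P s + Q s) Hc). pose proof (Hsq _ (P s - Q s) Hc).
      lra.
    - replace (locally 0) with (locally (0 * 0 + 0 * 0)) by (f_equal; ring).
      apply (filterlim_Rplus_fun _ (fun s => P s * P s) (fun s => Q s * Q s)).
      + exact (filterlim_Rmult_fun _ P P 0 0 HP0 HP0).
      + exact (filterlim_Rmult_fun _ Q Q 0 0 HQ0 HQ0). }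
  unfold E in HE. split; nra.
Qed.

Lemma is_lim_exp_neg (k : R) : 0 < k -> is_lim (fun t => exp (- k * t)) p_infty 0.
Proof.
  intros Hk. apply (is_lim_comp exp (fun t => - k * t) p_infty 0 m_infty).
  - exact is_lim_exp_m.
  - pose proof (is_lim_scal_l (fun t => t) (- k) p_infty p_infty (is_lim_id _)) as H.
    simpl in H. destruct (Rle_dec 0 (- k)); [lra|]. exact H.
  - exists 0. intros; discriminate.
Qed.

Section ExplicitSolution.

Variables mu lam : R.
Hypotheses (mu_pos : 0 < mu) (lam_pos : 0 < lam).

Definition Zinf : R := (4 * mu + 6) / (mu + 1).

Definition Vsol (c t : R) : R := c * exp (- (lam * mu) * t).

Definition Zsol (c z0 t : R) : R :=
  Zinf + 2 * c * exp (- (lam * mu) * t)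
  + (z0 - Zinf - 2 * c) * exp (- (lam * (mu + 1)) * t).

Lemma is_derive_Vsol (c t : R) : is_derive (Vsol c) t (- (lam * mu) * Vsol c t).
Proof. unfold Vsol. auto_derive; [auto|ring]. Qed.

Lemma is_derive_Zsol (c z0 t : R) :
  is_derive (Zsol c z0) t
    (- (lam * (mu + 1)) * Zsol c z0 t + lam * (4 * mu + 6 + 2 * Vsol c t)).
Proof. unfold Zsol, Vsol, Zinf. auto_derive; [auto|field; lra]. Qed.

Lemma Vsol0 (c : R) : Vsol c 0 = c.
Proof. unfold Vsol. rewrite Rmult_0_r, exp_0. ring. Qed.

Lemma Zsol0 (c z0 : R) : Zsol c z0 0 = z0.
Proof. unfold Zsol. rewrite !Rmult_0_r, exp_0. ring. Qed.

Lemma is_lim_Vsol (c : R) : is_lim (Vsol c) p_infty 0.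
Proof.
  replace (Finite 0) with (Rbar_mult c 0) by (simpl; f_equal; ring).
  apply is_lim_scal_l, is_lim_exp_neg, Rmult_lt_0_compat; lra.
Qed.

Lemma is_lim_Zsol (c z0 : R) : is_lim (Zsol c z0) p_infty Zinf.
Proof.
  assert (Hmu : is_lim (fun t => exp (- (lam * mu) * t)) p_infty 0)
    by (apply is_lim_exp_neg, Rmult_lt_0_compat; lra).
  assert (Hmu1 : is_lim (fun t => exp (- (lam * (mu + 1)) * t)) p_infty 0)
    by (apply is_lim_exp_neg, Rmult_lt_0_compat; lra).
  replace (Finite Zinf) with (Finite (Zinf + 2 * c * 0 + (z0 - Zinf - 2 * c) * 0))
    by (f_equal; ring).
  apply is_lim_plus'; [apply is_lim_plus'; [apply is_lim_const|]|];
    apply (is_lim_scal_l _ _ _ (Finite 0)); assumption.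
Qed.

End ExplicitSolution.

Section Solution.

Variables (mu lam : R) (x y : R -> R) (c z0 : R).
Hypotheses (mu_pos : 0 < mu) (lam_pos : 0 < lam).
Hypothesis x_derive : forall t, 0 < t -> is_derive x t (fx mu lam (x t) (y t)).
Hypothesis y_derive : forall t, 0 < t -> is_derive y t (fy mu lam (x t) (y t)).
Hypothesis x_right_cont : filterlim x (at_right 0) (locally (x 0)).
Hypothesis y_right_cont : filterlim y (at_right 0) (locally (y 0)).
Hypotheses (z0_init : y 0 * z0 = 1) (c_init : (x 0 - 2 * y 0) * z0 = c).

Let Z := Zsol mu lam c z0.
Let V := Vsol mu lam c.
Let P (t : R) : R := y t * Z t - 1.
Let Q (t : R) : R := (x t - 2 * y t) * Z t - V t.

Lemma is_derive_P (t : R) : 0 < t ->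
  is_derive P t ((- lam * (4 * mu + 6) * y t) * P t + (- 2 * lam * y t) * Q t).
Proof.
  intros Ht.
  replace (_ * P t + _) with
    (fy mu lam (x t) (y t) * Z t
     + y t * (- (lam * (mu + 1)) * Z t + lam * (4 * mu + 6 + 2 * V t)) - 0)
    by (unfold P, Q, fy; ring).
  apply (is_derive_minus (fun s => y s * Z s) (fun _ => 1));
    [|exact (is_derive_const (K := R_AbsRing) 1 t)].
  apply (is_derive_mult y Z); [exact (y_derive t Ht)| |exact Rmult_comm].
  exact (is_derive_Zsol mu lam mu_pos c z0 t).
Qed.

Lemma is_derive_Q (t : R) : 0 < t ->
  is_derive Q t ((- lam * (4 * mu + 6) * (x t - 2 * y t)) * P t
                 + (- lam * (mu + 2 * (x t - 2 * y t))) * Q t).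
Proof.
  intros Ht.
  replace (_ * P t + _) with
    ((fx mu lam (x t) (y t) - 2 * fy mu lam (x t) (y t)) * Z t
     + (x t - 2 * y t) * (- (lam * (mu + 1)) * Z t + lam * (4 * mu + 6 + 2 * V t))
     - - (lam * mu) * V t)
    by (unfold P, Q, fx, fy; ring).
  apply (is_derive_minus (fun s => (x s - 2 * y s) * Z s) V); [|apply is_derive_Vsol].
  apply (is_derive_mult (fun s => x s - 2 * y s) Z);
    [|exact (is_derive_Zsol mu lam mu_pos c z0 t)|exact Rmult_comm].
  apply (is_derive_minus x (fun s => 2 * y s)); [exact (x_derive t Ht)|].
  exact (is_derive_scal y t 2 _ (y_derive t Ht)).
Qed.

Lemma P_Q_eq0 (t : R) : 0 < t -> P t = 0 /\ Q t = 0.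
Proof.
  intros Ht.
  destruct (bounded_Ioc_of_derive x t (fun s Hs => ex_intro _ _ (x_derive s Hs))
              x_right_cont) as [Mx HMx].
  destruct (bounded_Ioc_of_derive y t (fun s Hs => ex_intro _ _ (y_derive s Hs))
              y_right_cont) as [My HMy].
  set (B := Mx + 2 * My).
  assert (HZ0 : filterlim Z (at_right 0) (locally z0)).
  { rewrite <- (Zsol0 mu lam c z0).
    exact (filterlim_at_right_of_derive _ 0 _ (is_derive_Zsol mu lam mu_pos c z0 0)). }
  apply (linear_ode2_eq0
           (fun s => - lam * (4 * mu + 6) * y s) (fun s => - 2 * lam * y s)
           (fun s => - lam * (4 * mu + 6) * (x s - 2 * y s))
           (fun s => - lam * (mu + 2 * (x s - 2 * y s)))
           P Q (lam * ((4 * mu + 6) * B + mu + 2 * B)) t);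
    [exact is_derive_P|exact is_derive_Q| | | |lra].
  - intros s Hs.
    pose proof (proj1 (Rabs_le_between _ _) (HMx s Hs)).
    pose proof (proj1 (Rabs_le_between _ _) (HMy s Hs)).
    assert (-B <= y s <= B) by (unfold B; lra).
    assert (-B <= x s - 2 * y s <= B) by (unfold B; lra).
    assert (0 <= B) by lra.
    assert (0 < lam * (4 * mu + 6)) by (apply Rmult_lt_0_compat; lra).
    repeat split; apply Rabs_le_between; split; nra.
  - replace (locally 0) with (locally (y 0 * z0 - 1)) by (f_equal; lra).
    apply (filterlim_Rminus_fun _ (fun s => y s * Z s) (fun _ => 1));
      [exact (filterlim_Rmult_fun _ y Z _ _ y_right_cont HZ0)|apply filterlim_const].
  - replace (locally 0) with (locally ((x 0 - 2 * y 0) * z0 - c)) by (f_equal; lra).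
    apply (filterlim_Rminus_fun _ (fun s => (x s - 2 * y s) * Z s) V).
    + apply (filterlim_Rmult_fun _ (fun s => x s - 2 * y s) Z); [|exact HZ0].
      apply (filterlim_Rminus_fun _ x (fun s => 2 * y s)); [exact x_right_cont|].
      exact (filterlim_Rmult_fun _ (fun _ => 2) y _ _ (filterlim_const 2) y_right_cont).
    + rewrite <- (Vsol0 mu lam c).
      exact (filterlim_at_right_of_derive _ 0 _ (is_derive_Vsol mu lam c 0)).
Qed.

Lemma is_lim_solution : is_lim x p_infty (xc mu) /\ is_lim y p_infty (yc mu).
Proof.
  assert (HZinf : 0 < Zinf mu) by (unfold Zinf; apply Rdiv_lt_0_compat; lra).
  assert (Hinv : is_lim (fun t => / Z t) p_infty (/ Zinf mu)).
  { apply (is_lim_inv Z p_infty (Zinf mu)); [apply is_lim_Zsol; assumption|].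
    intros H. injection H. lra. }
  assert (Hsol : forall t, 0 < t -> y t = / Z t /\ x t = (V t + 2) * / Z t).
  { intros t Ht. destruct (P_Q_eq0 t Ht) as [HP HQ]. unfold P, Q in HP, HQ.
    assert (Z t <> 0) by (intros H; rewrite H in HP; lra).
    split; field_simplify_eq; auto; lra. }
  split.
  - apply (is_lim_ext_loc (fun t => (V t + 2) * / Z t));
      [exists 0; intros t Ht; symmetry; apply Hsol, Ht|].
    replace (Finite (xc mu)) with (Rbar_mult (0 + 2) (/ Zinf mu))
      by (unfold xc, Zinf; simpl; f_equal; field; lra).
    apply is_lim_mult; [|exact Hinv|exact I].
    apply is_lim_plus'; [apply is_lim_Vsol|apply is_lim_const]; lra.
  - apply (is_lim_ext_loc (fun t => / Z t));
      [exists 0; intros t Ht; symmetry; apply Hsol, Ht|].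
    replace (yc mu) with (/ Zinf mu) by (unfold yc, Zinf; field; lra).
    exact Hinv.
Qed.

End Solution.

Theorem lemma6 (mu lam1 : R) (x y : R -> R) :
  0 < mu -> 0 < lam1 ->
  (* (x,y) is a forward solution on [0, +oo): differentiable for t > 0 with
     the ODE, and right-continuous at t = 0 *)
  (forall t, 0 < t -> is_derive x t (fx mu lam1 (x t) (y t))) ->
  (forall t, 0 < t -> is_derive y t (fy mu lam1 (x t) (y t))) ->
  filterlim x (at_right 0) (locally (x 0)) ->
  filterlim y (at_right 0) (locally (y 0)) ->
  inQ (x 0) (y 0) ->
  is_lim x p_infty (xc mu) /\ is_lim y p_infty (yc mu).
Proof.
  intros Hmu Hlam Hx Hy Hx0 Hy0 HQ.
  assert (Hy0_neq0 : y 0 <> 0) by (unfold inQ in HQ; lra).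
  apply (is_lim_solution mu lam1 x y ((x 0 - 2 * y 0) / y 0) (/ y 0)); try assumption.
  - field. exact Hy0_neq0.
  - unfold Rdiv. ring.
Qed.
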